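(* Let $R$ be a finite commutative unital ring, $N\ge2$ with $N\in R^{\times}$, and $q\in R$ a root of the $N$-th cyclotomic polynomial over $\mathbb{Z}$. Let $\alpha$ be the exponent of $R^{\times}$ (which is divisible by $N$), let $k$ be the integer with $\alpha=kN$, and let $\beta$ be the nilpotence index of $R$. For $u\in R^{\times}$ and $a\in R$, the element \[\mathcal{Q}_u=(u^k-G^{\alpha})G^{\beta}\in T\] is a polynomial $H_N^q$-identity for $\mathcal{B}_{(u,a)}$.
   Context: The nilpotence index $\beta$ of $R$ is a positive integer such that $r^\beta=0$ for every nilpotent $r\in R$ (the largest nilpotency index of a nilpotent element). $H_N^q$ is the Taft Hopf algebra over $R$: generated by $g,x$ with $g^N=1$, $x^N=0$, $xg=qgx$, $\Delta(g)=g\otimes g$, $\Delta(x)=1\otimes x+x\otimes g$, $\varepsilon(g)=1$, $\varepsilon(x)=0$, free over $R$ with basis $\{g^mx^n:0\le m,n<N\}$. $\mathcal{B}_{(u,a)}$ is the $R$-algebra generated by $v_g,v_x$ with $v_g^N=u$, $v_x^N=a$, $v_xv_g=qv_gv_x$, a right $H_N^q$-comodule algebra via $v_g\mapsto v_g\otimes g$, $v_x\mapsto1\otimes x+v_x\otimes g$. Let $Z_i^H$ ($i\ge1$) be copies $\{Z_i^h:h\in H_N^q\}$ of the $R$-module $H_N^q$, $T=T(\bigoplus_iZ_i^H)$ the tensor algebra with coaction $\delta(Z_i^h)=\sum Z_i^{h_1}\otimes h_2$, and $G=Z_1^g$; $u^k$ denotes the scalar $u^k\cdot 1_T$. $P\in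 T$ is a polynomial $H_N^q$-identity for a right $H_N^q$-comodule algebra $B$ if $f(P)=0$ for all right $H_N^q$-comodule algebra maps $f:T\to B$. *)

From HB Require Import structures.
From mathcomp Require Import all_boot all_order all_algebra all_fingroup all_solvable all_field.
Set Implicit Arguments. Unset Strict Implicit. Unset Printing Implicit Defensive.
Import GRing.Theory.
Local Open Scope ring_scope.

(* Free R-modules of rank N^2: coordinates w.r.t. a basis indexed by pairs
   (m, n), 0 <= m, n < N.  For H_N^q the basis vector (m,n) is g^m x^n,
   for B_(u,a) it is v_g^m v_x^n. *)
Definition idx (N : nat) := ('I_N * 'I_N)%type.
Definition vec (R : Type) (N : nat) := {ffun idx N -> R}.
(* elements of  B (x) H  or  H (x) H : coordinates w.r.t. the tensor basis *)
Definition tvec (R : Type) (N : nat) := {ffun idx N * idx N -> R}.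

Section Twisted.
Variables (R : comNzRingType) (N : nat) (q : R).

Definition bas (m n : nat) : vec R N :=
  [ffun l : idx N => (((l.1 : nat) == (m %% N)%N) && ((l.2 : nat) == (n %% N)%N))%:R].

(* product of basis vectors in the algebra generated by A, X with
   A^N = u, X^N = a, X A = q A X :
   (A^m X^n)(A^m' X^n') = q^(n m') A^(m+m') X^(n+n') *)
Definition twprod (u a : R) (i j : idx N) : vec R N :=
  [ffun l => q ^+ (i.2 * j.1)%N * u ^+ ((i.1 + j.1) %/ N)%N
             * a ^+ ((i.2 + j.2) %/ N)%N * bas (i.1 + j.1)%N (i.2 + j.2)%N l].

(* bilinear extension: multiplication of B_(u,a); H_N^q is the case u=1,a=0 *)
Definition twmul (u a : R) (b c : vec R N) : vec R N :=
  [ffun l => \sum_(i : idx N) \sum_(j : idx N) b i * c j * twprod u a i j l].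

Definition tbas (m n m' n' : nat) : tvec R N :=
  [ffun l => bas m n l.1 * bas m' n' l.2].

Definition tenmul (u1 a1 u2 a2 : R) (w z : tvec R N) : tvec R N :=
  [ffun l => \sum_(p : idx N * idx N) \sum_(p' : idx N * idx N)
     w p * z p' * (twprod u1 a1 p.1 p'.1 l.1 * twprod u2 a2 p.2 p'.2 l.2)].

Definition powby {T : Type} (mul : T -> T -> T) (one : T) (x : T) (n : nat) : T :=
  iter n (mul x) one.

Definition tadd (w z : tvec R N) : tvec R N := [ffun l => w l + z l].

(* comultiplication of H_N^q on basis elements: the algebra map with
   Delta(g) = g (x) g, Delta(x) = 1 (x) x + x (x) g *)
Definition Delta_bas (i : idx N) : tvec R N :=
  let mul := tenmul 1 0 1 0 in
  mul (powby mul (tbas 0 0 0 0) (tbas 1 0 1 0) i.1)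
      (powby mul (tbas 0 0 0 0) (tadd (tbas 0 0 0 1) (tbas 0 1 1 0)) i.2).

(* coaction of B_(u,a) on basis elements: the algebra map with
   v_g |-> v_g (x) g, v_x |-> 1 (x) x + v_x (x) g *)
Definition coact_bas (u a : R) (i : idx N) : tvec R N :=
  let mul := tenmul u a 1 0 in
  mul (powby mul (tbas 0 0 0 0) (tbas 1 0 1 0) i.1)
      (powby mul (tbas 0 0 0 0) (tadd (tbas 0 0 0 1) (tbas 0 1 1 0)) i.2).

Definition coact (u a : R) (b : vec R N) : tvec R N :=
  [ffun l => \sum_(i : idx N) b i * coact_bas u a i l].

(* (phi (x) id) applied to an element of H (x) H, phi : H -> B given on basis *)
Definition phi_tens (phi : idx N -> vec R N) (w : tvec R N) : tvec R N :=
  [ffun l => \sum_(p : idx N * idx N) w p * (phi p.1 l.1 * (p.2 == l.2)%:R)].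

Definition colinear (u a : R) (phi : idx N -> vec R N) : Prop :=
  forall b : idx N, coact u a (phi b) = phi_tens phi (Delta_bas b).

End Twisted.

(* Elements of the tensor algebra T = T(\bigoplus_i Z_i^H), as terms.
   TZ i h stands for Z_(i+1)^h (h in H_N^q given by coordinates). *)
Inductive Tterm (R : Type) (N : nat) : Type :=
| TC of R
| TZ of nat & vec R N
| TAdd of Tterm R N & Tterm R N
| TOpp of Tterm R N
| TMul of Tterm R N & Tterm R N.

Arguments TC {R N}.
Arguments TZ {R N}.
Arguments TAdd {R N}.
Arguments TOpp {R N}.
Arguments TMul {R N}.

Definition Tpow (R : Type) (N : nat) (one : R) (t : Tterm R N) (n : nat) : Tterm R N :=
  iter n (TMul t) (TC one).

Section Eval.
Variables (R : comNzRingType) (N : nat) (q u a : R).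

(* The algebra map f : T -> B_(u,a) determined by the R-linear maps
   phi i : Z_(i+1)^H = H -> B (given on the basis of H). *)
Fixpoint evalT (phi : nat -> idx N -> vec R N) (t : Tterm R N) : vec R N :=
  match t with
  | TC r => [ffun l => r * bas R N 0 0 l]
  | TZ i h => [ffun l => \sum_(b : idx N) h b * phi i b l]
  | TAdd s t => [ffun l => evalT phi s l + evalT phi t l]
  | TOpp s => [ffun l => - evalT phi s l]
  | TMul s t => twmul q u a (evalT phi s) (evalT phi t)
  end.

(* P is a polynomial H_N^q-identity for B_(u,a): f(P) = 0 for every
   comodule algebra map f : T -> B_(u,a), i.e. for every family of
   H-colinear maps phi i : H -> B. *)
Definition poly_identity (P : Tterm R N) : Prop :=
  forall phi : nat -> idx N -> vec R N,
    (forall i, colinear q u a (phi i)) ->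
    evalT phi P = [ffun _ => 0].

End Eval.

Definition Gterm (R : comNzRingType) (N : nat) : Tterm R N := TZ 0 (bas R N 1 0).

Definition Qterm (R : comNzRingType) (N : nat) (u : R) (k alpha beta : nat) : Tterm R N :=
  TMul (TAdd (TC (u ^+ k)) (TOpp (Tpow 1 (Gterm R N) alpha))) (Tpow 1 (Gterm R N) beta).

Definition nilpotent_elt (R : comNzRingType) (r : R) : Prop := exists n : nat, r ^+ n = 0.

Definition nilpotence_index (R : comNzRingType) (beta : nat) : Prop :=
  (0 < beta)%N /\ (forall r : R, nilpotent_elt r -> r ^+ beta = 0) /\
  (forall c : nat, (0 < c)%N -> (forall r : R, nilpotent_elt r -> r ^+ c = 0) -> (beta <= c)%N).

From HB Require Import structures.
From mathcomp Require Import all_boot all_order all_algebra all_fingroup all_solvable all_field.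
From mathcomp Require Import ring.

Set Implicit Arguments.
Unset Strict Implicit.
Unset Printing Implicit Defensive.
Local Open Scope ring_scope.
Import GRing.Theory.

(* A colinear map phi : H -> B sends the grouplike g to c v_g for a scalar c:
   the v_x-free part of delta(v_g^m v_x^n) = (v_g (x) g)^m (1 (x) x + v_x (x) g)^n
   is v_g^m (x) g^m x^n, so comparing these coefficients in
   delta(phi g) = phi g (x) g kills every coordinate of phi g except the one on
   v_g.  An algebra map f with f(G) = c v_g then gives
   f(Q_u) = u^k (1 - c^alpha) c^beta u^(beta / N) v_g^beta, since v_g^alpha = u^k.
   Finally c^beta (1 - c^alpha) = 0 in every finite commutative ring: some power
   e = c^m is idempotent, c e + (1 - e) is a unit, whence c^alpha e = e, and
   c (1 - e) is nilpotent, whence c^beta (1 - e) = 0. *)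

Lemma unit_expr_exponent (R : finComUnitRingType) (x : R) :
  x \is a GRing.unit -> x ^+ exponent [set: {unit R}] = 1.
Proof.
move=> Ux; have := expg_exponent (in_setT (FinRing.Unit Ux)).
by move/(congr1 val); rewrite FinRing.val_unitX.
Qed.

Lemma expr_idempotent_split (R : comPzRingType) (e x y : R) n :
  e * e = e -> (x * e + y * (1 - e)) ^+ n = x ^+ n * e + y ^+ n * (1 - e).
Proof.
move=> ee; elim: n => [|n IHn]; first by rewrite !expr0 !mul1r addrC subrK.
rewrite exprS IHn !exprS.
transitivity (x * x ^+ n * e + y * y ^+ n * (1 - e)
              + (e * e - e) * (x * x ^+ n - x * y ^+ n - y * x ^+ n + y * y ^+ n)).
  by ring.
by rewrite ee subrr mul0r addr0.
Qed.

Lemma expr_idempotent_of_period (R : pzSemiRingType) (r : R) i p :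
  (0 < p)%N -> r ^+ (i + p) = r ^+ i ->
  exists2 m, (0 < m)%N & r ^+ m * r ^+ m = r ^+ m.
Proof.
move=> p_gt0 rip.
have shift x : (i <= x)%N -> r ^+ (x + p) = r ^+ x.
  by move=> le_ix; rewrite -(subnK le_ix) -addnA exprD rip -exprD.
have period x t : (i <= x)%N -> r ^+ (x + t * p) = r ^+ x.
  move=> le_ix; elim: t => [|t IHt]; first by rewrite mul0n addn0.
  by rewrite mulSnr addnA shift ?IHt // (leq_trans le_ix) ?leq_addr.
exists (i.+1 * p)%N; first by rewrite muln_gt0.
by rewrite -exprD period // (leq_trans (leqnSn i)) ?leq_pmulr.
Qed.

Lemma finite_expr_idempotent (R : finNzRingType) (r : R) :
  exists2 m, (0 < m)%N & r ^+ m * r ^+ m = r ^+ m.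
Proof.
pose f (i : 'I_#|R|.+1) := r ^+ i.
have [/injectiveP/leq_card|/injectivePn [i [j neq_ji fij]]] := boolP (injectiveb f).
  by rewrite card_ord ltnn.
rewrite /f in fij.
have [lt_ij|lt_ji|/val_inj eq_ij] := ltngtP i j; last by rewrite eq_ij eqxx in neq_ji.
  by apply: (@expr_idempotent_of_period _ _ i (j - i)); rewrite ?subn_gt0 // subnKC 1?ltnW.
by apply: (@expr_idempotent_of_period _ _ j (i - j)); rewrite ?subn_gt0 // subnKC 1?ltnW.
Qed.

Lemma expr_mul_subr_exponent_eq0 (R : finComUnitRingType) beta (r : R) :
  (forall s : R, nilpotent_elt s -> s ^+ beta = 0) ->
  r ^+ beta * (1 - r ^+ exponent [set: {unit R}]) = 0.
Proof.
move=> nil_beta; set alpha := exponent _.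
have zero_beta : (0 : R) ^+ beta = 0 by apply: nil_beta; exists 1%N.
have beta_gt0 : (0 < beta)%N.
  by rewrite lt0n; apply: contra_eqN zero_beta => /eqP->; rewrite expr0 oner_neq0.
have [m m_gt0] := finite_expr_idempotent r; set e := r ^+ m => ee.
have unit_part : r * e + 1 * (1 - e) \is a GRing.unit.
  rewrite -(unitrX_pos _ m_gt0) expr_idempotent_split // -/e ee.
  by rewrite expr1n mul1r subrKC unitr1.
have r_alpha_e : r ^+ alpha * e = e.
  move: (unit_expr_exponent unit_part).
  by rewrite expr_idempotent_split // expr1n mul1r => /(canRL (addrK _)) ->; apply: subKr.
have nil_part : r ^+ beta * (1 - e) = 0.
  have nil_r1e : nilpotent_elt (0 * e + r * (1 - e)).
    exists m; rewrite expr_idempotent_split // expr0n gtn_eqF //.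
    by rewrite mul0r add0r -/e mulrBr mulr1 ee subrr.
  by move: (nil_beta _ nil_r1e); rewrite expr_idempotent_split // zero_beta mul0r add0r.
transitivity (r ^+ beta * (e - r ^+ alpha * e) + r ^+ beta * (1 - e) * (1 - r ^+ alpha)).
  by ring.
by rewrite r_alpha_e nil_part subrr mulr0 mul0r addr0.
Qed.

Section TwistedAlgebra.
Variables (R : comNzRingType) (N : nat) (q : R).
Hypothesis N_gt1 : (1 < N)%N.

Let N_gt0 : (0 < N)%N := ltnW N_gt1.
Let i0 : 'I_N := Ordinal N_gt0.
Let i1 : 'I_N := Ordinal N_gt1.

Lemma basE (i j : 'I_N) l : bas R N i j l = (l == (i, j))%:R.
Proof. by rewrite ffunE !modn_small //; case: l. Qed.

Lemma tbasE (a b c d : 'I_N) l :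
  tbas R N a b c d l = (l == ((a, b), (c, d)))%:R.
Proof.
by rewrite ffunE !basE -natrM mulnb; case: l => l1 l2; rewrite [in RHS]xpair_eqE.
Qed.

Lemma twprod_eq0 (u a : R) (i j l : idx N) :
  (l.2 : nat) != ((i.2 + j.2) %% N)%N -> twprod q u a i j l = 0.
Proof. by move=> l2_neq; rewrite !ffunE (negbTE l2_neq) andbF mulr0. Qed.

Lemma twprod1r (u a : R) (i l : idx N) : twprod q u a i (i0, i0) l = (l == i)%:R.
Proof.
rewrite ffunE /= !addn0 muln0 !divn_small // expr0 !mulr1 mul1r.
by rewrite basE -surjective_pairing.
Qed.

Lemma twprod1l (u a : R) (j l : idx N) : twprod q u a (i0, i0) j l = (l == j)%:R.
Proof.
rewrite ffunE /= !add0n mul0n !divn_small // !expr0 !mul1r.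
by rewrite basE -surjective_pairing.
Qed.

Lemma twprod_small (u a : R) (i j l : idx N) :
  (i.1 + j.1 < N)%N -> (i.2 + j.2 < N)%N ->
  twprod q u a i j l = q ^+ (i.2 * j.1) * bas R N (i.1 + j.1) (i.2 + j.2) l.
Proof. by move=> lt1 lt2; rewrite ffunE !divn_small // !expr0 !mulr1. Qed.

Section TensorProduct.
Variables u1 a1 u2 a2 : R.
Local Notation tenmul := (tenmul q u1 a1 u2 a2).

Lemma tenmulDl (w1 w2 z : tvec R N) :
  tenmul (tadd w1 w2) z = tadd (tenmul w1 z) (tenmul w2 z).
Proof.
apply/ffunP => l; rewrite !ffunE -big_split; apply: eq_bigr => p _ /=.
by rewrite -big_split; apply: eq_bigr => p' _; rewrite ffunE !mulrDl.
Qed.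

Lemma tenmul_tbasl (a b c d : 'I_N) (z : tvec R N) l :
  tenmul (tbas R N a b c d) z l =
  \sum_p z p * (twprod q u1 a1 (a, b) p.1 l.1 * twprod q u2 a2 (c, d) p.2 l.2).
Proof.
rewrite ffunE (big_only1 ((a, b), (c, d))) // => [|p neq_p _].
  by apply: eq_bigr => p _; rewrite tbasE eqxx mul1r.
by apply: big1 => p' _; rewrite tbasE (negbTE neq_p) !mul0r.
Qed.

Lemma tenmul1r (w : tvec R N) : tenmul w (tbas R N 0 0 0 0) = w.
Proof.
have one_E := tbasE i0 i0 i0 i0.
apply/ffunP => l; rewrite ffunE (big_only1 l) // => [|p neq_pl _].
  rewrite (big_only1 ((i0, i0), (i0, i0))) // => [|p' neq_p' _].
    by rewrite one_E eqxx mulr1 !twprod1r !eqxx !mulr1.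
  by rewrite one_E (negbTE neq_p') mulr0 mul0r.
rewrite (big_only1 ((i0, i0), (i0, i0))) // => [|p' neq_p' _].
  rewrite !twprod1r -natrM mulnb; case: p neq_pl => [p1 p2] /= neq_pl.
  by rewrite -xpair_eqE -surjective_pairing eq_sym (negbTE neq_pl) mulr0.
by rewrite one_E (negbTE neq_p') mulr0 mul0r.
Qed.

End TensorProduct.

Section Coaction.
Variables u a : R.
Local Notation mul := (tenmul q u a 1 0).
Local Notation one := (tbas R N 0 0 0 0).

Lemma coact_g_pow m : (m < N)%N ->
  powby mul one (tbas R N 1 0 1 0) m = tbas R N m 0 m 0.
Proof.
elim: m => [//|m IHm] lt_mN; pose im : 'I_N := Ordinal (ltnW lt_mN).
rewrite /powby iterS -/(powby _ _ _ m) (IHm (ltnW lt_mN)); apply/ffunP => l.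
rewrite (tenmul_tbasl u a 1 0 i1 i0 i1 i0).
rewrite (big_only1 ((im, i0), (im, i0))) // => [|p neq_p _].
  rewrite (tbasE im i0 im i0) eqxx mul1r !twprod_small /= ?add1n ?add0n //.
  by rewrite mul0n expr0 !mul1r [RHS]ffunE.
by rewrite (tbasE im i0 im i0) (negbTE neq_p) mul0r.
Qed.

Definition coact_x_pow n : tvec R N :=
  powby mul one (tadd (tbas R N 0 0 0 1) (tbas R N 0 1 1 0)) n.

Lemma coact_x_powSE n (l : idx N * idx N) : coact_x_pow n.+1 l =
    \sum_p coact_x_pow n p *
      (twprod q u a (i0, i0) p.1 l.1 * twprod q 1 0 (i0, i1) p.2 l.2)
  + \sum_p coact_x_pow n p *
      (twprod q u a (i0, i1) p.1 l.1 * twprod q 1 0 (i1, i0) p.2 l.2).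
Proof.
have -> : coact_x_pow n.+1 =
    mul (tadd (tbas R N 0 0 0 1) (tbas R N 0 1 1 0)) (coact_x_pow n) by [].
rewrite tenmulDl ffunE.
by rewrite (tenmul_tbasl _ _ _ _ i0 i0 i0 i1) (tenmul_tbasl _ _ _ _ i0 i1 i1 i0).
Qed.

(* [l.1.2] is the v_x-degree of the B-factor; the bound [n < N] keeps it from
   wrapping around through v_x^N = a. *)
Lemma coact_x_pow_high n (l : idx N * idx N) :
  (n < N)%N -> (n < l.1.2)%N -> coact_x_pow n l = 0.
Proof.
elim: n l => [|n IHn] l lt_nN lt_nl.
  rewrite /coact_x_pow /= (tbasE i0 i0 i0 i0); case: eqP => // el.
  by move: lt_nl; rewrite el /= ltnn.
rewrite coact_x_powSE !big1 ?addr0 // => p _.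
  case: (ltnP n p.1.2) => [lt_np|le_pn].
    by rewrite (IHn p (ltnW lt_nN) lt_np) mul0r.
  have lt_p1N : (p.1.2.+1 < N)%N by rewrite (leq_ltn_trans _ lt_nN) // ltnS.
  rewrite twprod_eq0 ?mul0r ?mulr0 //= add1n modn_small //.
  by apply: contraTneq lt_nl => ->; rewrite ltnS -leqNgt.
rewrite twprod1l; case: eqP => [el|_]; last by rewrite mul0r mulr0.
by rewrite (IHn p (ltnW lt_nN)) ?mul0r // -el (ltnW lt_nl).
Qed.

Lemma coact_x_pow_deg0 (n j : 'I_N) (h : idx N) :
  coact_x_pow n ((j, i0), h) = ((j, h) == (i0, (i0, n)))%:R.
Proof.
case: n => n; elim: n j h => [|n IHn] j h lt_nN.
  rewrite /coact_x_pow /= (tbasE i0 i0 i0 i0).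
  have -> : Ordinal lt_nN = i0 by apply: val_inj.
  by rewrite !xpair_eqE eqxx andbT.
pose in_ : 'I_N := Ordinal (ltnW lt_nN).
rewrite coact_x_powSE [X in _ + X]big1 ?addr0 => [|p _].
  rewrite (big_only1 ((j, i0), (i0, in_))) // => [|p neq_p _].
    rewrite twprod1l eqxx mul1r (IHn _ _ (ltnW lt_nN)) twprod_small //= add1n.
    rewrite (basE i0 (Ordinal lt_nN)) mul1n expr0 mul1r -natrM mulnb.
    by rewrite [X in X && _]xpair_eqE eqxx andbT xpair_eqE.
  rewrite twprod1l; case: eqP => [e1|_]; last by rewrite mul0r mulr0.
  case: p e1 neq_p => p1 p2 /= <- neq_p; rewrite (IHn _ _ (ltnW lt_nN)).
  have /negbTE-> : (j, p2) != (i0, (i0, in_)) by apply: contra neq_p => /eqP[-> ->].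
  by rewrite mul0r.
case: (ltnP n p.1.2) => [lt_np|le_pn].
  by rewrite (coact_x_pow_high (ltnW lt_nN) lt_np) mul0r.
have lt_p1N : (p.1.2.+1 < N)%N by rewrite (leq_ltn_trans _ lt_nN) // ltnS.
by rewrite twprod_eq0 ?mul0r ?mulr0 //= add1n modn_small.
Qed.

Lemma coact_bas_diag (i j : idx N) : coact_bas q u a i ((j.1, i0), j) = (i == j)%:R.
Proof.
rewrite /coact_bas /= coact_g_pow // -/(coact_x_pow i.2).
rewrite (tenmul_tbasl u a 1 0 i.1 i0 i.1 i0).
rewrite (big_only1 ((i0, i0), (i0, i.2))) // => [|p neq_p _].
  rewrite coact_x_pow_deg0 eqxx mul1r twprod1r twprod_small ?addn0 ?add0n //=.
  rewrite muln0 expr0 mul1r basE -surjective_pairing.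
  by case: (eqVneq i j) => [->|neq_ij]; rewrite ?eqxx ?mulr1 // mulr0.
case: (eqVneq (p.1.2 : nat) 0%N) => [p12_0|p12_neq0].
  have p12_i0 : p.1.2 = i0 by apply: val_inj.
  case: p p12_i0 neq_p p12_0 => [[p11 p12] p2] /= -> neq_p _; rewrite coact_x_pow_deg0.
  have /negbTE-> : (p11, p2) != (i0, (i0, i.2)) by apply: contra neq_p => /eqP[-> ->].
  by rewrite mul0r.
by rewrite twprod_eq0 ?mul0r ?mulr0 //= add0n modn_small // eq_sym.
Qed.

Lemma colinear_grouplike (phi : idx N -> vec R N) : colinear q u a phi ->
  forall l, phi (i1, i0) l = phi (i1, i0) (i1, i0) * (l == (i1, i0))%:R.
Proof.
move=> colin l; case: eqP => [->|neq_l]; first by rewrite mulr1.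
have := congr1 (fun w : tvec R N => w ((l.1, i0), l)) (colin (i1, i0)).
rewrite /= ffunE (big_only1 l) // => [|i neq_il _]; last first.
  by rewrite coact_bas_diag (negbTE neq_il) mulr0.
have -> : Delta_bas q (i1, i0) = tbas R N 1 0 1 0.
  by rewrite /Delta_bas /powby /= !tenmul1r.
rewrite coact_bas_diag eqxx mulr1 => ->; rewrite ffunE.
rewrite (big_only1 ((i1, i0), (i1, i0))) // => [|p neq_p _].
  by rewrite (tbasE i1 i0 i1 i0) eqxx mul1r /= eq_sym (introF eqP neq_l) !mulr0.
by rewrite (tbasE i1 i0 i1 i0) (negbTE neq_p) mul0r.
Qed.

End Coaction.

Section Evaluation.
Variables u a : R.

Lemma twmul_single (b c : vec R N) (i j l : idx N) :
  (forall i', i' != i -> b i' = 0) -> (forall j', j' != j -> c j' = 0) ->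
  twmul q u a b c l = b i * c j * twprod q u a i j l.
Proof.
move=> b_i c_j; rewrite ffunE (big_only1 i) // => [|i' neq_i' _].
  by rewrite (big_only1 j) // => j' neq_j' _; rewrite c_j // mulr0 mul0r.
by apply: big1 => j' _; rewrite b_i // !mul0r.
Qed.

Lemma evalT_Gpow (phi : nat -> idx N -> vec R N) (c : R) :
  (forall l, phi 0%N (i1, i0) l = c * (l == (i1, i0))%:R) -> forall n,
  evalT q u a phi (Tpow 1 (Gterm R N) n) =
    [ffun l => c ^+ n * u ^+ (n %/ N) * bas R N n 0 l].
Proof.
move=> phi_g.
have evalG : evalT q u a phi (Gterm R N) = [ffun l => c * (l == (i1, i0))%:R].
  apply/ffunP => l; rewrite !ffunE (big_only1 (i1, i0)) // => [|b neq_b _].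
    by rewrite (basE i1 i0) eqxx mul1r phi_g.
  by rewrite (basE i1 i0) (negbTE neq_b) mul0r.
elim=> [|n IHn]; first by apply/ffunP => l; rewrite !ffunE div0n !expr0 !mul1r.
have -> : evalT q u a phi (Tpow 1 (Gterm R N) n.+1) =
  twmul q u a (evalT q u a phi (Gterm R N)) (evalT q u a phi (Tpow 1 (Gterm R N) n)) by [].
pose im : 'I_N := Ordinal (ltn_pmod n N_gt0).
have bas_n l : bas R N n 0 l = (l == (im, i0))%:R.
  by rewrite -(basE im i0) !ffunE modn_mod.
rewrite evalG IHn; apply/ffunP => l.
rewrite (twmul_single (i := (i1, i0)) (j := (im, i0))) => [|i neq_i|j neq_j]; first last.
- by rewrite ffunE bas_n (negbTE neq_j) mulr0.
- by rewrite ffunE (negbTE neq_i) mulr0.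
rewrite !ffunE /= !eqxx ?mod0n ?eqxx /= mulr1 mul0n !add0n div0n ?mod0n modnDmr !add1n.
have -> : (n.+1 %/ N = n %/ N + (n %% N).+1 %/ N)%N.
  by rewrite {1}(divn_eq n N) -addnS divnMDl.
by rewrite exprD exprS !expr0; ring.
Qed.

Lemma evalT_Qterm (phi : nat -> idx N -> vec R N) (c : R) k alpha beta :
  (forall l, phi 0%N (i1, i0) l = c * (l == (i1, i0))%:R) ->
  alpha = (k * N)%N -> c ^+ beta * (1 - c ^+ alpha) = 0 ->
  evalT q u a phi (Qterm N u k alpha beta) = [ffun _ => 0].
Proof.
move=> phi_g -> annih; apply/ffunP => l.
rewrite /Qterm /= !(evalT_Gpow phi_g) !ffunE.
apply: big1 => i _; apply: big1 => j _.
rewrite !ffunE mulnK // modnMl !mod0n.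
set bas_i := (_ && _)%:R; set bas_j := (_ && _)%:R.
set tw := (q ^+ _ * _ * _ * _).
transitivity (c ^+ beta * (1 - c ^+ (k * N)) *
              (u ^+ k * bas_i * (u ^+ (beta %/ N) * bas_j) * tw)); first by ring.
by rewrite annih mul0r.
Qed.

End Evaluation.

End TwistedAlgebra.

Theorem proposition3p5 (R : finComUnitRingType) (N : nat) (q : R)
  (k beta : nat) (u a : R) :
  (2 <= N)%N ->
  (N%:R : R) \is a GRing.unit ->
  root (map_poly intr 'Phi_N) q ->
  exponent [set: {unit R}] = (k * N)%N ->
  nilpotence_index R beta ->
  u \is a GRing.unit ->
  poly_identity q u a (Qterm N u k (exponent [set: {unit R}]) beta).
Proof.
move=> N_gt1 _ _ exp_kN [_ [nil_beta _]] _ phi colin.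
apply: (evalT_Qterm _ _ _ (colinear_grouplike N_gt1 (colin 0%N)) exp_kN).
exact: expr_mul_subr_exponent_eq0.
Qed.
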